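(* Let $\theta>1$, $r\in(\theta^{-1},\theta^{-1/2}]$ and \[ \beta^*:=\frac{1-r^2\theta}{r\theta}\max\Big(\frac{1}{1-r},\frac{1}{r\theta-1}\Big). \] Let $\mathsf{A}$ be any deterministic online algorithm for one-max search with predictions having robustness $r$ and consistency $\frac1{r\theta}$, and suppose there is $\beta\ge0$ such that for all $n\ge1$, all $p\in[1,\theta]^n$ with maximum $p^*$ and all $y\in[1,\theta]$, \[ \frac{\mathsf{A}(p,y)}{p^*}\ge\max\Big(r,\ \frac1{r\theta}-\beta\,\frac{|p^*-y|}{p^*}\Big). \] Then $\beta\ge\beta^*$. Moreover, the algorithm $\mathsf{A}^1_r$ satisfies this inequality (for all $n,p,y$) with $\beta=\beta^*$.
   Context: One-max search: fix $\theta>1$. An instance is a sequence of prices $p=(p_1,\dots,p_n)\in[1,\theta]^n$, revealed one at a time; the algorithm receives at the start a prediction $y\in[1,\theta]$ of $p^*:=\max_ip_i$. At each step it irrevocably accepts the current price (payoff = that price) or rejects it; if nothing is accepted by step $n$ the payoff is $1$. Consistency: $\inf_p \mathsf{A}(p,p^* )/p^*$; robustness: $\inf_{p,y}\mathsf{A}(p,y)/p^*$. For $\Phi:[1,\theta]\to[1,\theta]$, the threshold algorithm $\mathsf{A}_\Phi$ accepts the first $p_i$ with $p_i\ge\Phi(y)$. Let $\varphi_r(z)=\frac{r\theta-1}{1-r}+\frac{1-r^2\theta}{1-r}\cdot\frac{z}{r\theta}$ and $\Phi^1_r(z)=\max(r\theta,\varphi_r(z))$; $\mathsf{A}^1_r:=\mathsf{A}_{\Phi^1_r}$.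 *)

From Stdlib Require Import Reals Lra List.
Import ListNotations.
Open Scope R_scope.

(* A deterministic online algorithm for one-max search with predictions:
   given the prediction y and the prefix (p_1,...,p_i) of prices revealed
   so far (the last element being the current price p_i), it decides
   whether to accept the current price (true) or reject it (false). *)
Definition algo := R -> list R -> bool.

Fixpoint run (A : algo) (y : R) (hist rest : list R) : R :=
  match rest with
  | [] => 1
  | x :: t => if A y (hist ++ [x]) then x else run A y (hist ++ [x]) t
  end.

Definition payoff (A : algo) (y : R) (p : list R) : R := run A y [] p.

(* pstar = max_i p_i  (for prices in [1,theta], folding from 1 is exact) *)
Definition pmax (p : list R) : R := fold_right Rmax 1 p.

Definition instance (theta : R) (n : nat) (p : list R) : Prop :=
  (1 <= n)%nat /\ length p = n /\ Forall (fun x => 1 <= x <= theta) p.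

Definition robust (theta r : R) (A : algo) : Prop :=
  forall n p y, instance theta n p -> 1 <= y <= theta ->
    payoff A y p / pmax p >= r.

Definition consistent (theta c : R) (A : algo) : Prop :=
  forall n p, instance theta n p -> payoff A (pmax p) p / pmax p >= c.

Definition threshold_alg (Phi : R -> R) : algo :=
  fun y hist => if Rle_dec (Phi y) (last hist 0) then true else false.

Definition phi_r (theta r z : R) : R :=
  (r * theta - 1) / (1 - r) + (1 - r ^ 2 * theta) / (1 - r) * (z / (r * theta)).

Definition Phi1 (theta r z : R) : R := Rmax (r * theta) (phi_r theta r z).

Definition A1r (theta r : R) : algo := threshold_alg (Phi1 theta r).

Definition beta_star (theta r : R) : R :=
  (1 - r ^ 2 * theta) / (r * theta) * Rmax (1 / (1 - r)) (1 / (r * theta - 1)).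

Definition smooth_guarantee (theta r beta : R) (A : algo) : Prop :=
  forall n p y, instance theta n p -> 1 <= y <= theta ->
    payoff A y p / pmax p >=
      Rmax r (1 / (r * theta) - beta * (Rabs (pmax p - y) / pmax p)).

(* The threshold line phi_r z = s z + K is the line through (r theta, r theta) and
   (theta, 1/r), and beta_star = max (s, s / K).

   Lower bound: with an exact prediction, consistency 1/(r theta) forces A to accept a
   first price x > r theta, and to reject a first price q < 1/r when theta is predicted.
   Following the accepted x by theta (prediction x), resp. ending the instance after the
   rejected q (prediction theta), turns the smoothness inequality into an affine
   inequality in x, resp. q, on a half-open interval; at the endpoints x = r theta and
   q = 1/r it reads beta >= s, resp. beta >= s / K.

   Upper bound: A^1_r either accepts some v >= Phi1 y >= phi_r y, and phi_r P >= P/(r theta)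
   for P <= theta, so the error is at most s |P - y|; or it accepts nothing, so
   P < phi_r y, which for P > r theta forces y > P with K (P/(r theta) - 1) < s (y - P). *)

From Stdlib Require Import Reals Lra List.
Import ListNotations.
Open Scope R_scope.

Lemma affine_nonneg_left_end (a b c k : R) :
  a < b -> (forall x, a < x <= b -> 0 <= c + k * x) -> 0 <= c + k * a.
Proof.
  intros Hab Hf.
  destruct (Rle_or_lt 0 (c + k * a)) as [Ha | Ha]; [exact Ha | exfalso].
  pose proof (Hf b ltac:(lra)) as Hb.
  set (d := k * (b - a)).
  assert (Hd : 0 < d) by (unfold d; lra).
  (* at a + t (b - a) the function takes the value (c + k a) / 2 < 0 *)
  set (t := - (c + k * a) / (2 * d)).
  assert (Ht : 0 < t) by (apply Rdiv_lt_0_compat; lra).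
  assert (Htd : t * d = - (c + k * a) / 2) by (unfold t; field; lra).
  assert (Ht1 : t <= 1) by (assert (t * d <= 1 * d) by (unfold d in *; lra); nra).
  pose proof (Hf (a + t * (b - a)) ltac:(nra)) as Hx.
  assert (c + k * (a + t * (b - a)) = c + k * a + t * d) by (unfold d; ring).
  lra.
Qed.

Lemma affine_nonneg_right_end (a b c k : R) :
  a < b -> (forall x, a <= x < b -> 0 <= c + k * x) -> 0 <= c + k * b.
Proof.
  intros Hab Hf.
  replace (c + k * b) with (c + - k * - b) by ring.
  apply (affine_nonneg_left_end (- b) (- a)); [lra |].
  intros x Hx; replace (c + - k * x) with (c + k * - x) by ring.
  apply Hf; lra.
Qed.

Lemma le_div_iff (a v P : R) : 0 < P -> a <= v / P <-> a * P <= v.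
Proof.
  intros HP; replace v with (v / P * P) at 2 by (field; lra).
  split; intros H; [apply Rmult_le_compat_r | apply Rmult_le_reg_r with P]; lra.
Qed.

Lemma le_sub_div_iff (c beta d v P : R) :
  0 < P -> c - beta * (d / P) <= v / P <-> c * P - beta * d <= v.
Proof.
  intros HP; rewrite le_div_iff by exact HP.
  replace ((c - beta * (d / P)) * P) with (c * P - beta * d) by (field; lra).
  reflexivity.
Qed.

Lemma pmax_ge_1 (p : list R) : 1 <= pmax p.
Proof.
  induction p as [| x p IH]; simpl; [lra |].
  eapply Rle_trans; [exact IH | apply Rmax_r].
Qed.

Lemma pmax_ge_In (p : list R) (x : R) : In x p -> x <= pmax p.
Proof.
  induction p as [| a p IH]; simpl; [tauto |].
  intros [-> | Hx]; [apply Rmax_l |].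
  eapply Rle_trans; [apply IH, Hx | apply Rmax_r].
Qed.

Lemma pmax_le (p : list R) (T : R) :
  1 <= T -> Forall (fun x => x <= T) p -> pmax p <= T.
Proof. intros HT Hp; induction Hp; simpl; [lra | apply Rmax_lub; assumption]. Qed.

Lemma pmax_lt (p : list R) (T : R) :
  1 < T -> Forall (fun x => x < T) p -> pmax p < T.
Proof. intros HT Hp; induction Hp; simpl; [lra | apply Rmax_lub_lt; assumption]. Qed.

Lemma instance_singleton (theta x : R) :
  1 <= x <= theta -> instance theta 1 [x].
Proof. intros Hx; repeat split; auto. Qed.

Lemma instance_pair (theta x z : R) :
  1 <= x <= theta -> 1 <= z <= theta -> instance theta 2 [x; z].
Proof. intros Hx Hz; repeat split; auto. Qed.

Lemma run_threshold_alg (Phi : R -> R) (y : R) (rest hist : list R) :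
  let v := run (threshold_alg Phi) y hist rest in
  (v = 1 /\ Forall (fun x => x < Phi y) rest) \/ (Phi y <= v /\ In v rest).
Proof.
  revert hist; induction rest as [| x rest IH]; intros hist; simpl.
  - left; split; [reflexivity | constructor].
  - replace (threshold_alg Phi y (hist ++ [x])) with
      (if Rle_dec (Phi y) x then true else false)
      by (unfold threshold_alg; now rewrite last_last).
    destruct (Rle_dec (Phi y) x) as [Hx | Hx].
    + right; split; [exact Hx | left; reflexivity].
    + destruct (IH (hist ++ [x])) as [[Hv Hrest] | [Hv Hin]].
      * left; split; [exact Hv | constructor; [lra | exact Hrest]].
      * right; split; [exact Hv | right; exact Hin].
Qed.

Lemma consistent_accepts_singleton (theta c : R) (A : algo) (x : R) :
  consistent theta c A -> 1 <= x <= theta -> 1 < c * x -> A x [x] = true.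
Proof.
  intros Hc Hx Hcx.
  pose proof (Hc 1%nat [x] (instance_singleton theta x Hx)) as H.
  unfold payoff, pmax in H; simpl in H; rewrite Rmax_left in H by lra.
  destruct (A x [x]); [reflexivity | exfalso].
  apply Rge_le, le_div_iff in H; lra.
Qed.

Lemma consistent_rejects_first (theta c : R) (A : algo) (q : R) :
  consistent theta c A -> 1 <= q <= theta -> q < c * theta -> A theta [q] = false.
Proof.
  intros Hc Hq Hqc.
  pose proof (Hc 2%nat [q; theta] (instance_pair theta q theta Hq ltac:(lra))) as H.
  unfold payoff, pmax in H; simpl in H.
  rewrite (Rmax_left theta 1), (Rmax_right q theta) in H by lra.
  destruct (A theta [q]); [exfalso | reflexivity].
  apply Rge_le, le_div_iff in H; lra.
Qed.

Lemma smooth_guarantee_scaled (theta r beta : R) (A : algo) n p y :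
  smooth_guarantee theta r beta A -> instance theta n p -> 1 <= y <= theta ->
  1 / (r * theta) * pmax p - beta * Rabs (pmax p - y) <= payoff A y p.
Proof.
  intros Hsm Hp Hy.
  apply (le_sub_div_iff _ _ _ _ _ (Rlt_le_trans _ _ _ Rlt_0_1 (pmax_ge_1 p))).
  eapply Rle_trans; [apply Rmax_r | apply Rge_le; eapply Hsm; eassumption].
Qed.

Lemma ratio_ge_guarantee (r c beta d v P : R) :
  0 < P -> r * P <= v -> c * P - beta * d <= v -> v / P >= Rmax r (c - beta * (d / P)).
Proof.
  intros HP Hrob Hsm; apply Rle_ge, Rmax_lub.
  - apply le_div_iff; assumption.
  - apply le_sub_div_iff; assumption.
Qed.

Definition phi_slope (theta r : R) : R := (1 - r ^ 2 * theta) / (1 - r) / (r * theta).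

Definition phi_intercept (theta r : R) : R := (r * theta - 1) / (1 - r).

Section OneMaxSearch.

Variables theta r : R.
Hypothesis theta_gt_1 : 1 < theta.
Hypothesis r_range : / theta < r <= / sqrt theta.

Local Notation s := (phi_slope theta r).
Local Notation K := (phi_intercept theta r).

Lemma r_bounds : 0 < r /\ r < 1 /\ 1 < r * theta /\ r ^ 2 * theta <= 1.
Proof.
  destruct r_range as [Hlo Hhi].
  assert (Hinv : 0 < / theta) by (apply Rinv_0_lt_compat; lra).
  assert (Hrt : 1 < r * theta).
  { apply (Rmult_lt_compat_r theta) in Hlo; [| lra]. rewrite Rinv_l in Hlo; lra. }
  assert (Hsq : 0 < sqrt theta) by (apply sqrt_lt_R0; lra).
  assert (Hsq2 : sqrt theta * sqrt theta = theta) by (apply sqrt_sqrt; lra).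
  assert (Hrs : r * sqrt theta <= 1).
  { apply (Rmult_le_compat_r (sqrt theta)) in Hhi; [| lra]. rewrite Rinv_l in Hhi; lra. }
  assert (Hr2 : r ^ 2 * theta = (r * sqrt theta) * (r * sqrt theta))
    by (rewrite <- Hsq2 at 1; ring).
  repeat split; nra.
Qed.

Lemma intercept_gt_0 : 0 < K.
Proof.
  destruct r_bounds as (? & ? & ? & ?).
  unfold phi_intercept; apply Rdiv_lt_0_compat; lra.
Qed.

Lemma slope_ge_0 : 0 <= s.
Proof.
  destruct r_bounds as (? & ? & ? & ?).
  unfold phi_slope; apply Rmult_le_pos; [apply Rmult_le_pos |];
    try (left; apply Rinv_0_lt_compat); lra.
Qed.

Lemma phi_r_affine (z : R) : phi_r theta r z = s * z + K.
Proof.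
  destruct r_bounds as (? & ? & ? & ?).
  unfold phi_r, phi_slope, phi_intercept; field; lra.
Qed.

Lemma phi_r_at_theta : s * theta + K = 1 / r.
Proof.
  destruct r_bounds as (? & ? & ? & ?).
  unfold phi_slope, phi_intercept; field; lra.
Qed.

Lemma one_sub_slope : 1 - s = K / (r * theta).
Proof.
  destruct r_bounds as (? & ? & ? & ?).
  unfold phi_slope, phi_intercept; field; lra.
Qed.

Lemma phi_r_ge_scaled (P : R) : P <= theta -> P / (r * theta) <= s * P + K.
Proof.
  destruct r_bounds as (? & ? & ? & ?).
  intros HP.
  assert (E : s * P + K - P / (r * theta) = K * (theta - P) / theta)
    by (unfold phi_slope, phi_intercept; field; lra).
  assert (0 <= K * (theta - P) / theta).
  { apply Rmult_le_pos; [pose proof intercept_gt_0; nra | left; apply Rinv_0_lt_compat; lra]. }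
  lra.
Qed.

Lemma beta_star_max : beta_star theta r = Rmax s (s / K).
Proof.
  destruct r_bounds as (? & ? & ? & ?).
  unfold beta_star; rewrite <- RmaxRmult.
  - f_equal; unfold phi_slope, phi_intercept; field; lra.
  - apply Rmult_le_pos; [lra | left; apply Rinv_0_lt_compat; lra].
Qed.

Lemma Phi1_le_inv_r (y : R) : y <= theta -> Phi1 theta r y <= 1 / r.
Proof.
  destruct r_bounds as (? & ? & ? & ?).
  intros Hy; unfold Phi1; rewrite phi_r_affine; apply Rmax_lub.
  - apply le_div_iff; nra.
  - rewrite <- phi_r_at_theta; pose proof slope_ge_0; nra.
Qed.

Lemma beta_star_ge_slope : s <= beta_star theta r.
Proof. rewrite beta_star_max; apply Rmax_l. Qed.

Lemma beta_star_mul_intercept_ge_slope : s <= beta_star theta r * K.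
Proof.
  pose proof intercept_gt_0 as HK.
  assert (H : s / K <= beta_star theta r) by (rewrite beta_star_max; apply Rmax_r).
  apply (Rmult_le_compat_r K) in H; [| lra].
  replace (s / K * K) with s in H by (field; lra); exact H.
Qed.

Lemma A1r_smooth_if_rejected (P y : R) :
  P < Phi1 theta r y ->
  1 / (r * theta) * P - beta_star theta r * Rabs (P - y) <= 1.
Proof.
  destruct r_bounds as (? & ? & Hu & ?).
  pose proof slope_ge_0 as Hs; pose proof intercept_gt_0 as HK.
  pose proof beta_star_ge_slope as HB.
  intros HP.
  destruct (Rle_or_lt P (r * theta)) as [HPu | HPu].
  - assert (1 / (r * theta) * P <= 1).
    { replace 1 with (1 / (r * theta) * (r * theta)) at 2 by (field; lra).
      apply Rmult_le_compat_l; [left; apply Rdiv_lt_0_compat |]; lra. }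
    pose proof (Rabs_pos (P - y)); nra.
  - assert (Hphi : P < s * y + K).
    { unfold Phi1 in HP; rewrite phi_r_affine in HP; unfold Rmax in HP.
      destruct (Rle_dec (r * theta) (s * y + K)); lra. }
    (* beyond r theta the line phi_r lies below the diagonal, so phi_r y > P forces y > P *)
    assert (Hgap : K * (P / (r * theta) - 1) < s * (y - P)).
    { assert (E : s * (y - P) - K * (P / (r * theta) - 1) = s * y + K - P).
      { replace (K * (P / (r * theta) - 1)) with (K / (r * theta) * P - K) by (field; lra).
        rewrite <- one_sub_slope; ring. }
      lra. }
    assert (Hgap0 : 0 < K * (P / (r * theta) - 1)).
    { apply Rmult_lt_0_compat; [exact HK |].
      assert (1 < P / (r * theta)) by (apply (Rmult_lt_reg_r (r * theta)); [lra |]; field_simplify; lra).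
      lra. }
    assert (HyP : P < y) by nra.
    rewrite Rabs_minus_sym, Rabs_right by lra.
    pose proof beta_star_mul_intercept_ge_slope.
    assert (Hlt : K * (P / (r * theta) - 1) < K * (beta_star theta r * (y - P))) by nra.
    apply Rmult_lt_reg_l in Hlt; [| exact HK].
    unfold Rdiv in *; lra.
Qed.

Lemma A1r_smooth_if_accepted (P y v : R) :
  P <= theta -> Phi1 theta r y <= v ->
  1 / (r * theta) * P - beta_star theta r * Rabs (P - y) <= v.
Proof.
  destruct r_bounds as (? & ? & ? & ?).
  pose proof slope_ge_0 as Hs; pose proof beta_star_ge_slope as HB.
  intros HP Hv.
  assert (Hphi : s * y + K <= v).
  { eapply Rle_trans; [| exact Hv]. unfold Phi1; rewrite phi_r_affine; apply Rmax_r. }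
  pose proof (phi_r_ge_scaled P HP) as Hdiag.
  pose proof (Rle_abs (P - y)) as Habs.
  assert (s * Rabs (P - y) <= beta_star theta r * Rabs (P - y))
    by (apply Rmult_le_compat_r; [apply Rabs_pos | exact HB]).
  unfold Rdiv in *; nra.
Qed.

Lemma A1r_robust_if_rejected (P y : R) :
  y <= theta -> P < Phi1 theta r y -> r * P <= 1.
Proof.
  destruct r_bounds as (? & ? & ? & ?).
  intros Hy HP; pose proof (Phi1_le_inv_r y Hy).
  assert (r * P <= r * (1 / r)) by (apply Rmult_le_compat_l; lra).
  replace (r * (1 / r)) with 1 in * by (field; lra); lra.
Qed.

Lemma A1r_robust_if_accepted (P y v : R) :
  P <= theta -> Phi1 theta r y <= v -> r * P <= v.
Proof.
  destruct r_bounds as (? & ? & ? & ?).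
  intros HP Hv; pose proof (Rmax_l (r * theta) (phi_r theta r y)).
  unfold Phi1 in Hv; nra.
Qed.

Lemma A1r_smooth_guarantee : smooth_guarantee theta r (beta_star theta r) (A1r theta r).
Proof.
  destruct r_bounds as (? & ? & ? & ?).
  intros n p y (_ & _ & Hp) Hy.
  pose proof (pmax_ge_1 p) as HP1.
  assert (HPth : pmax p <= theta).
  { apply pmax_le; [lra |]. eapply Forall_impl; [| exact Hp]; simpl; intros; lra. }
  unfold payoff, A1r.
  destruct (run_threshold_alg (Phi1 theta r) y p []) as [[-> Hlt] | [Hge Hin]].
  - assert (HP : pmax p < Phi1 theta r y).
    { apply pmax_lt; [| exact Hlt].
      pose proof (Rmax_l (r * theta) (phi_r theta r y)); unfold Phi1; lra. }
    apply ratio_ge_guarantee; [lra | |].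
    + apply (A1r_robust_if_rejected _ y); lra.
    + apply A1r_smooth_if_rejected; exact HP.
  - pose proof (pmax_ge_In p _ Hin).
    apply ratio_ge_guarantee; [lra | |].
    + apply (A1r_robust_if_accepted _ y); assumption.
    + apply A1r_smooth_if_accepted; assumption.
Qed.

Section LowerBound.

Variables (A : algo) (beta : R).
Hypothesis A_consistent : consistent theta (1 / (r * theta)) A.
Hypothesis A_smooth : smooth_guarantee theta r beta A.

Lemma smooth_bound_on_accepted_pair (x : R) :
  r * theta < x <= theta -> 0 <= (beta * theta - 1 / r) + (1 - beta) * x.
Proof.
  destruct r_bounds as (? & ? & ? & ?).
  intros Hx.
  assert (Hacc : A x [x] = true).
  { apply (consistent_accepts_singleton theta (1 / (r * theta))); [assumption | lra |].
    apply (Rmult_lt_reg_r (r * theta)); [lra |]; field_simplify; lra. }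
  pose proof (smooth_guarantee_scaled theta r beta A 2 [x; theta] x A_smooth
    (instance_pair theta x theta ltac:(lra) ltac:(lra)) ltac:(lra)) as Hsm.
  unfold payoff, pmax in Hsm; simpl in Hsm; rewrite Hacc in Hsm.
  rewrite (Rmax_left theta 1), (Rmax_right x theta), Rabs_right in Hsm by lra.
  replace (1 / (r * theta) * theta) with (1 / r) in Hsm by (field; lra).
  lra.
Qed.

Lemma smooth_bound_on_rejected_singleton (q : R) :
  1 <= q < 1 / r -> 0 <= (1 + beta * theta) + (- (1 / (r * theta)) - beta) * q.
Proof.
  destruct r_bounds as (? & ? & ? & ?).
  intros Hq.
  assert (Hinv : 1 / r < theta) by (apply (Rmult_lt_reg_l r); [lra |]; field_simplify; lra).
  assert (Hrej : A theta [q] = false).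
  { apply (consistent_rejects_first theta (1 / (r * theta))); [assumption | lra |].
    replace (1 / (r * theta) * theta) with (1 / r) by (field; lra); lra. }
  pose proof (smooth_guarantee_scaled theta r beta A 1 [q] theta A_smooth
    (instance_singleton theta q ltac:(lra)) ltac:(lra)) as Hsm.
  unfold payoff, pmax in Hsm; simpl in Hsm; rewrite Hrej in Hsm.
  rewrite (Rmax_left q 1), Rabs_left1 in Hsm by lra.
  lra.
Qed.

Lemma slope_le_beta : s <= beta.
Proof.
  destruct r_bounds as (? & ? & ? & ?).
  pose proof (affine_nonneg_left_end (r * theta) theta _ _ ltac:(nra)
    smooth_bound_on_accepted_pair) as Hend.
  apply (Rmult_le_reg_r (theta - r * theta)); [nra |].
  replace (s * (theta - r * theta)) with (1 / r - r * theta)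
    by (unfold phi_slope; field; lra).
  nra.
Qed.

Lemma slope_div_intercept_le_beta : s / K <= beta.
Proof.
  destruct r_bounds as (? & ? & ? & ?).
  assert (Hinv : 1 < 1 / r) by (apply (Rmult_lt_reg_l r); [lra |]; field_simplify; lra).
  assert (Hgap : 0 < theta - 1 / r).
  { assert (1 / r < theta) by (apply (Rmult_lt_reg_l r); [lra |]; field_simplify; lra). lra. }
  pose proof (affine_nonneg_right_end 1 (1 / r) _ _ Hinv
    smooth_bound_on_rejected_singleton) as Hend.
  apply (Rmult_le_reg_r (theta - 1 / r)); [exact Hgap |].
  replace (s / K * (theta - 1 / r)) with (1 / (r * (r * theta)) - 1)
    by (unfold phi_slope, phi_intercept; field; repeat split; nra).
  replace ((- (1 / (r * theta)) - beta) * (1 / r)) with (- (1 / (r * (r * theta))) - beta * (1 / r))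
    in Hend by (field; lra).
  lra.
Qed.

Lemma beta_star_le_beta : beta_star theta r <= beta.
Proof.
  rewrite beta_star_max; apply Rmax_lub; [apply slope_le_beta | apply slope_div_intercept_le_beta].
Qed.

End LowerBound.

End OneMaxSearch.

Theorem theorem4 (theta r : R) :
  (1 < theta -> / theta < r <= / sqrt theta ->
  (forall (A : algo) (beta : R),
      robust theta r A -> consistent theta (1 / (r * theta)) A ->
      0 <= beta -> smooth_guarantee theta r beta A ->
      beta >= beta_star theta r)
  /\ smooth_guarantee theta r (beta_star theta r) (A1r theta r))%R.
Proof.
  intros Htheta Hr; split.
  - intros A beta _ Hcons _ Hsmooth.
    apply Rle_ge, (beta_star_le_beta theta r Htheta Hr A beta Hcons Hsmooth).
  - exact (A1r_smooth_guarantee theta r Htheta Hr).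
Qed.
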